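(* Let $\mathcal C$ be a $\Delta$-complex labeled over $B(X,P)$, let $C$ be a $k$-cell of $\mathcal C$ with $k\ge2$ and characteristic map $\sigma\colon\Delta^k\to\mathcal C$. Let $q$ be any closed generalized path based at $v_0$ in $\partial\Delta^k$ (where $\partial\Delta^k$ is regarded as a $\Delta$-complex whose cells are the proper faces of $\Delta^k$), and let $p=\sigma(q)$ be its image generalized path in $\mathcal C$ (each face $F$ of $q$ replaced by the cell of $\mathcal C$ whose characteristic map is $\sigma|_F$). Then $\ell(C)\le\ell(p)$ in $M(X,P)$.
   Context: A $\Delta$-complex is a CW-complex in which each $k$-cell $c$ has a distinguished characteristic map $\sigma_c\colon\Delta^k\to\mathcal C$, $\Delta^k=[v_0,\dots,v_k]$ the standard simplex with ordered vertices, such that the restriction of $\sigma_c$ to each $(k-1)$-face (identified order-preservingly with $\Delta^{k-1}$) is the distinguished characteristic map of a $(k-1)$-cell. The root of $c$ is $\alpha(c)=\sigma_c(v_0)$; a $1$-cell $e$ is directed from $\alpha(e)=\sigma_e(v_0)$ to $\omega(e)=\sigma_e(v_1)$, and a formal inverse $e^{-1}$ with $\alpha(e^{-1})=\omega(e)$, $\omega(e^{-1})=\alpha(e)$ is adjoined. A generalized path is a sequence $e_1\cdots e_s$ ($s\ge0$) where each $e_i$ is a cell of dimension $\ge2$, a $1$-cell, or the formal inverse of a $1$-cell, with $\omega(e_{i-1})=\alpha(e_i)$, where for cells of dimension $\ge2$ one sets $\omega(c)=\alpha(c)$; it is closed at $v$ if it starts and ends at $v$. An immersion is a continuous map that is a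 local homeomorphism onto its image and commutes with characteristic maps. $B(X,P)$ is a $\Delta$-complex with one $0$-cell, $1$-cells indexed by $X$, $k$-cells ($2\le k\le n$) indexed by $P_k$, index sets pairwise disjoint, $P=\bigcup P_k$. $\mathcal C$ is labeled over $B(X,P)$ via an immersion $f_{\mathcal C}\colon\mathcal C\to B(X,P)$; $\ell(c)$ is the index of $f_{\mathcal C}(c)$, $\ell(e^{-1})=\ell(e)^{-1}$, and the label of a generalized path is the concatenated word in $(X\cup X^{-1}\cup P)^*$, read in $M(X,P)$. Boundary labels: for a $k$-cell $c$ ($k\ge2$) with characteristic map $\sigma$, let $c_i$ be the $(k-1)$-cell whose characteristic map is $\sigma$ restricted to the face omitting $v_i$, and $e(c)=\sigma([v_0,v_1])$; $bl(c)=\ell(\sigma[v_0,v_1])\ell(\sigma[v_1,v_2])\ell(\sigma[v_0,v_2])^{-1}$ if $k=2$, and $bl(c)=\ell(c_k)\cdots\ell(c_1)\ell(e(c))\ell(c_0)\ell(e(c))^{-1}$ if $k\ge3$; $bl(\rho)$ for $\rho\in P$ is the boundary label of the cell of $B(X,P)$ labeled $\rho$. $M(X,P)$ is the inverse monoid presented by generators $X\cup P$ and relations $\rho^2=\rho$, $\rho=\rho\,bl(\rho)$ for $\rho\in P$. Natural partial order: $a\le b$ iff $a=eb$ for an idempotent $e$. *)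

From mathcomp Require Import all_boot.
Set Implicit Arguments. Unset Strict Implicit. Unset Printing Implicit Defensive.

(* Delta-complexes, combinatorially: a Delta-complex is determined by  *)
(* its cells in each dimension and the face operators                  *)
(*   face m i : (m+1)-cells -> m-cells,                                *)
(* where face m i c is the cell whose characteristic map is sigma_c    *)
(* restricted to the face omitting v_i (0 <= i <= m+1).                *)
Record dcx := DCx {
  cell : nat -> Type;
  face : forall m : nat, nat -> cell m.+1 -> cell m
}.
Arguments cell d m : clear implicits.
Arguments face d {m} _ _.

Definition is_dcomplex (K : dcx) : Prop :=
  forall (m i j : nat) (c : cell K m.+2), i < j <= m.+2 ->
    face K i (face K j c) = face K j.-1 (face K i c).

(* vertex j (= sigma_c(v_j)) of a k-cell c, 0 <= j <= k *)
Fixpoint vert (K : dcx) (k : nat) : cell K k -> nat -> cell K 0 :=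
  match k return cell K k -> nat -> cell K 0 with
  | 0 => fun c _ => c
  | k'.+1 => fun c j =>
      if j < k'.+1 then vert (face K k'.+1 c) j
      else vert (face K 0 c) j.-1
  end.

(* Iterated faces: delete the vertices with the given indices, listed in
   decreasing order, so that earlier deletions do not shift later ones. *)
Fixpoint dels (K : dcx) (ds : seq nat) (k : nat) : cell K k -> {m : nat & cell K m} :=
  match ds with
  | [::] => fun c => existT _ k c
  | i :: ds' =>
      match k return cell K k -> {m : nat & cell K m} with
      | 0 => fun c => existT _ 0 c
      | k'.+1 => fun c => dels ds' (face K i c)
      end
  end.

(* sigma_c restricted to the face of Delta^k spanned by the vertex set S
   (S a strictly increasing list of indices in {0..k}). *)
Definition subface (K : dcx) (k : nat) (c : cell K k) (S : seq nat)
  : {m : nat & cell K m} :=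
  dels [seq i <- rev (iota 0 k.+1) | i \notin S] c.

(* e(c) = sigma_c([v_0,v_1]) for a (k+1)-cell c *)
Fixpoint edge01 (K : dcx) (k : nat) : cell K k.+1 -> cell K 1 :=
  match k return cell K k.+1 -> cell K 1 with
  | 0 => fun c => c
  | k'.+1 => fun c => edge01 (face K k'.+2 c)
  end.

(* Generators X u P = cells of B of dimension >= 1                     *)
(* (X = 1-cells, P_k = k-cells); a generator is (m, g) with g an       *)
(* (m+1)-cell. A letter is a generator together with an inversion flag *)
(* (true = formal inverse).                                            *)
Definition gen (B : dcx) := {m : nat & cell B m.+1}.
Definition letter (B : dcx) := (gen B * bool)%type.
Definition word (B : dcx) := seq (letter B).

Definition linv (B : dcx) (a : letter B) : letter B := (a.1, ~~ a.2).
Definition winv (B : dcx) (w : word B) : word B := rev (map (@linv B) w).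

Definition lt1 (B : dcx) (e : cell B 1) (inv : bool) : letter B :=
  (existT (fun m => cell B m.+1) 0 e, inv).

Definition bl (B : dcx) (m : nat) : cell B m.+2 -> word B :=
  match m return cell B m.+2 -> word B with
  | 0 => fun r =>
      [:: lt1 (face B 2 r) false; lt1 (face B 0 r) false; lt1 (face B 1 r) true]
  | m'.+1 => fun r =>
      [seq (existT (fun j => cell B j.+1) m'.+1 (face B i r), false)
         | i <- rev (iota 1 m'.+3)]
      ++ [:: lt1 (edge01 r) false;
             (existT (fun j => cell B j.+1) m'.+1 (face B 0 r), false);
             lt1 (edge01 r) true]
  end.

Definition ltP (B : dcx) (m : nat) (r : cell B m.+2) : letter B :=
  (existT (fun j => cell B j.+1) m.+1 r, false).

(* defining relations: Wagner congruence (free inverse monoid) plus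
   rho^2 = rho and rho = rho bl(rho) for rho in P *)
Inductive rstep (B : dcx) : word B -> word B -> Prop :=
| RW1 (w : word B) : rstep (w ++ winv w ++ w) w
| RW2 (w z : word B) :
    rstep (w ++ winv w ++ z ++ winv z) (z ++ winv z ++ w ++ winv w)
| RPidem (m : nat) (r : cell B m.+2) : rstep [:: ltP r; ltP r] [:: ltP r]
| RPbl (m : nat) (r : cell B m.+2) : rstep [:: ltP r] (ltP r :: bl r).

Inductive eqM (B : dcx) : word B -> word B -> Prop :=
| eqM_refl u : eqM u u
| eqM_sym u v : eqM u v -> eqM v u
| eqM_trans u v w : eqM u v -> eqM v w -> eqM u w
| eqM_step x u v y : rstep u v -> eqM (x ++ u ++ y) (x ++ v ++ y).

Definition leM (B : dcx) (a b : word B) : Prop :=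
  exists e : word B, eqM (e ++ e) e /\ eqM a (e ++ b).

Definition is_BXP (B : dcx) (n : nat) : Prop :=
  [/\ is_dcomplex B,
      exists v : cell B 0, forall w : cell B 0, w = v
    & forall m, n < m -> cell B m -> False].

(* f : C -> B commutes with characteristic maps (dimension preserving,
   commutes with faces) and is an immersion (locally injective: injective
   on the corners (c, j) at each vertex). *)
Definition is_labeling (C B : dcx) (f : forall m, cell C m -> cell B m) : Prop :=
  (forall m i (c : cell C m.+1), i <= m.+1 -> f m (face C i c) = face B i (f m.+1 c))
  /\ (forall m (c c' : cell C m.+1) j, j <= m.+1 ->
        vert c j = vert c' j -> f m.+1 c = f m.+1 c' -> c = c').

Definition cellword (C B : dcx) (f : forall m, cell C m -> cell B m)
  (d : {m : nat & cell C m}) (inv : bool) : word B :=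
  match d with
  | existT 0 _ => [::]
  | existT m'.+1 x => [:: (existT (fun j => cell B j.+1) m' (f m'.+1 x), inv)]
  end.

(* An item is (S, b): S the increasing vertex list of a proper face of *)
(* Delta^k of dimension >= 1; b = true means the formal inverse of the *)
(* 1-cell S (only allowed when S is an edge).                          *)
Definition bitem := (seq nat * bool)%type.

Definition valid_bitem (k : nat) (x : bitem) : bool :=
  [&& sorted ltn x.1, all (fun i => i <= k) x.1,
      2 <= size x.1, size x.1 <= k & x.2 ==> (size x.1 == 2)].

(* alpha and omega (for cells of dimension >= 2, omega = alpha = root) *)
Definition balpha (x : bitem) : nat :=
  if x.2 then nth 0 x.1 1 else head 0 x.1.
Definition bomega (x : bitem) : nat :=
  if size x.1 == 2 then (if x.2 then head 0 x.1 else nth 0 x.1 1) else head 0 x.1.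

Definition closed_bpath (k : nat) (q : seq bitem) : Prop :=
  all (valid_bitem k) q /\
  (forall i, i.+1 < size q ->
     bomega (nth ([::], false) q i) = balpha (nth ([::], false) q i.+1)) /\
  (q != [::] -> balpha (head ([::], false) q) = 0 /\
                bomega (last ([::], false) q) = 0).

Definition image_word (C B : dcx) (f : forall m, cell C m -> cell B m)
  (k : nat) (c : cell C k) (q : seq bitem) : word B :=
  flatten [seq cellword f (subface c x.1) x.2 | x <- q].

From Stdlib Require Import Setoid Morphisms.
From Pilot Require Import Defs.
From mathcomp Require Import all_boot zify.
Set Implicit Arguments. Unset Strict Implicit. Unset Printing Implicit Defensive.

(* Write [rho] for the label of [C] and [s_a] for the label of the edge
   [v_0 v_a] of [C] ([s_0] empty).  The relation [rho = rho bl(rho)] makes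
   [rho] absorb [bl(rho)] on the right, and [bl] of a cell of dimension >= 3
   is a product of the idempotents of its faces through the root and of a
   conjugate [e c_0 e^-1].  So [rho] absorbs the label of every face through
   [v_0], and [e F e^-1] for every face [F] opposite the root of such a face.
   Hence each item of a boundary path, from [v_i] to [v_j], satisfies
   [rho s_i l(x) = rho s_j]: an edge [v_i v_j] via the triangle [v_0 v_i v_j],
   a face [F] missing [v_0] via the cone on [F].  Along a closed path at [v_0]
   this gives [rho l(p) = rho], i.e. [l(C) = rho l(p)] with [rho] idempotent. *)

Lemma eqM_ctx (B : dcx) (x u v y : word B) :
  eqM u v -> eqM (x ++ u ++ y) (x ++ v ++ y).
Proof.
elim=> {u v} [u | u v _ | u v w _ huv _ hvw | x' u v y' huv].
- exact: eqM_refl.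
- exact: eqM_sym.
- exact: eqM_trans hvw.
- by have := eqM_step (x ++ x') (y' ++ y) huv; rewrite -!catA.
Qed.

Add Parametric Relation (B : dcx) : (word B) (@eqM B)
  reflexivity proved by (@eqM_refl B)
  symmetry proved by (@eqM_sym B)
  transitivity proved by (@eqM_trans B) as eqM_rel.

#[export] Hint Resolve eqM_refl : core.

Add Parametric Morphism (B : dcx) : (@cat (letter B))
  with signature (@eqM B) ==> (@eqM B) ==> (@eqM B) as eqM_cat.
Proof.
move=> u u' hu v v' hv; apply: (@eqM_trans _ _ (u' ++ v)).
  by have := eqM_ctx [::] v hu.
by have := eqM_ctx u' [::] hv; rewrite !cats0.
Qed.

Section InverseMonoid.
Variable B : dcx.
Implicit Types u v w g h t : word B.
Local Notation "u =M v" := (@eqM B u v) (at level 70).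

Lemma winv_cat u v : winv (u ++ v) = winv v ++ winv u.
Proof. by rewrite /winv map_cat rev_cat. Qed.

Lemma winvK : involutive (@winv B).
Proof.
move=> w; rewrite /winv map_rev revK -map_comp -[RHS]map_id.
by apply: eq_map => -[a b]; rewrite /linv /= negbK.
Qed.

Lemma rstep_eqM u v : rstep u v -> u =M v.
Proof. by move=> huv; have := eqM_step [::] [::] huv; rewrite !cats0. Qed.

Lemma eqM_catr u v t : u =M v -> u ++ t =M v ++ t.
Proof. by move=> huv; rewrite huv; reflexivity. Qed.

Lemma mulVKr w t : w ++ winv w ++ w ++ t =M w ++ t.
Proof. by have := eqM_catr t (rstep_eqM (RW1 w)); rewrite -!catA. Qed.

Lemma mulVK w : w ++ winv w ++ w =M w.
Proof. by have := mulVKr w [::]; rewrite !cats0. Qed.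

Lemma mulVVK w : winv w ++ w ++ winv w =M winv w.
Proof. by have := mulVK (winv w); rewrite winvK. Qed.

Lemma mulV_commr w z t :
  w ++ winv w ++ z ++ winv z ++ t =M z ++ winv z ++ w ++ winv w ++ t.
Proof. by have := eqM_catr t (rstep_eqM (RW2 w z)); rewrite -!catA. Qed.

Lemma mulVVKr w t : winv w ++ w ++ winv w ++ t =M winv w ++ t.
Proof. by have := mulVKr (winv w) t; rewrite winvK. Qed.

(* Uniqueness of inverses: with [a = winv u] and [b = winv v], both [a] and
   [b] equal [a v b], because idempotents of the form [w w^-1] commute. *)
Lemma winv_eqM u v : u =M v -> winv u =M winv v.
Proof.
move=> huv.
have uVv := mulV_commr v u; have Vuv := mulV_commr (winv v) (winv u).
rewrite !winvK in Vuv.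
have uVu := mulVK u; have uVV := mulVVKr u; have vVv := mulVK v; have vVV := mulVVK v.
set a := winv u in uVv Vuv uVu uVV *; set b := winv v in uVv Vuv vVv vVV *.
have vav : v ++ a ++ v =M v by rewrite -huv uVu.
have ava : a ++ v ++ a =M a by have := uVV [::]; rewrite !cats0 huv.
have vbua : v ++ b ++ u ++ a =M u ++ a ++ v ++ b.
  by have := uVv [::]; rewrite !cats0.
have av t : a ++ v ++ t =M a ++ u ++ t by rewrite -huv.
transitivity (a ++ v ++ b).
  transitivity (a ++ (v ++ b ++ v) ++ a); first by rewrite vVv ava.
  have va : v ++ a =M u ++ a by rewrite -huv.
  by rewrite -!catA va vbua uVV.
transitivity (b ++ (v ++ a ++ v) ++ b).
  by rewrite -!catA av Vuv vVV.
by rewrite vav vVV.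
Qed.
End InverseMonoid.

Add Parametric Morphism (B : dcx) : (@winv B)
  with signature (@eqM B) ==> (@eqM B) as eqM_winv.
Proof. exact: winv_eqM. Qed.

Section Idempotents.
Variable B : dcx.
Implicit Types u v w g h t : word B.
Local Notation "u =M v" := (@eqM B u v) (at level 70).

(* In an inverse monoid the idempotents are exactly the [u] with [u = u u^-1];
   this is the form that is convenient for rewriting. *)
Definition idem u := u =M u ++ winv u.

Lemma idem_mulV w : idem (w ++ winv w).
Proof. by rewrite /idem winv_cat winvK -!catA mulVKr. Qed.

Lemma idem_Vmul w : idem (winv w ++ w).
Proof. by have := idem_mulV (winv w); rewrite winvK. Qed.

Lemma idem_commr u v t : idem u -> idem v -> u ++ v ++ t =M v ++ u ++ t.
Proof. by move=> hu hv; rewrite hu hv -!catA mulV_commr. Qed.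

Lemma idem_comm u v : idem u -> idem v -> u ++ v =M v ++ u.
Proof. by move=> hu hv; have := idem_commr [::] hu hv; rewrite !cats0. Qed.

Lemma idem_mulKr u t : idem u -> u ++ u ++ t =M u ++ t.
Proof. by move=> hu; rewrite hu -!catA mulVKr. Qed.

Lemma idem_mulK u : idem u -> u ++ u =M u.
Proof. by move=> hu; have := idem_mulKr [::] hu; rewrite !cats0. Qed.

Lemma idem_winv u : idem u -> winv u =M u.
Proof. by move=> hu; rewrite {1}hu winv_cat winvK -hu. Qed.

Lemma idem_cat u v : idem u -> idem v -> idem (u ++ v).
Proof.
move=> hu hv; rewrite /idem winv_cat (idem_winv hu) (idem_winv hv) -!catA.
by rewrite (idem_mulKr u hv) (idem_comm hv hu) (idem_mulKr v hu).
Qed.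

Lemma idem_flatten (I : Type) (F : I -> word B) s :
  (forall i, idem (F i)) -> idem (flatten [seq F i | i <- s]).
Proof. by move=> hF; elim: s => [|i s IH] //=; apply: idem_cat. Qed.

Lemma idem_conj g u : idem u -> idem (g ++ u ++ winv g).
Proof.
move=> hu; rewrite /idem !winv_cat winvK (idem_winv hu) -!catA.
rewrite (catA (winv g) g) (idem_commr _ hu (idem_Vmul g)).
by rewrite -!catA (idem_mulKr _ hu) mulVKr.
Qed.

(* [u u = u] gives [u^-1 = (u u^-1)(u^-1 u)], a product of idempotents. *)
Lemma idemP u : u ++ u =M u -> idem u.
Proof.
move=> hu.
have uV : winv u =M (u ++ winv u) ++ (winv u ++ u).
  transitivity (winv u ++ (u ++ u) ++ winv u); first by rewrite hu mulVVK.
  by rewrite -catA catA idem_comm //; [exact: idem_Vmul | exact: idem_mulV].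
have VV : winv u ++ winv u =M winv u.
  by rewrite uV idem_mulK //; apply: idem_cat; [exact: idem_mulV | exact: idem_Vmul].
rewrite /idem; symmetry; rewrite uV -!catA (catA u u) hu (catA (winv u)) VV.
exact: mulVK.
Qed.

Definition absorbs h w := h ++ w =M h.

Lemma absorbs_eqM h u w : absorbs h u -> u =M u ++ w -> absorbs h w.
Proof. by move=> hu uw; rewrite /absorbs -{1}hu -catA -uw. Qed.

Lemma absorbs_split h u v :
  idem u -> idem v -> absorbs h (u ++ v) -> absorbs h u /\ absorbs h v.
Proof.
move=> hu hv; rewrite /absorbs => huv; split.
  transitivity ((h ++ u ++ v) ++ u); first by rewrite huv.
  by rewrite -!catA (idem_comm hv hu) (idem_mulKr _ hu) huv.
transitivity ((h ++ u ++ v) ++ v); first by rewrite huv.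
by rewrite -!catA (idem_mulK hv) huv.
Qed.

Lemma absorbs_flatten (I : eqType) h (F : I -> word B) s i :
  (forall i, idem (F i)) -> absorbs h (flatten [seq F i | i <- s]) ->
  i \in s -> absorbs h (F i).
Proof.
move=> hF; elim: s => [|j s IH] //= hs.
have [hj hs'] := absorbs_split (hF j) (idem_flatten s hF) hs.
by rewrite in_cons => /orP [/eqP ->|]; last exact: IH.
Qed.

Lemma absorbs_mulV r t : idem r -> absorbs r t -> absorbs r (t ++ winv t).
Proof.
move=> hr ht; rewrite /absorbs; symmetry.
transitivity ((r ++ t) ++ winv (r ++ t)); first by rewrite ht.
rewrite winv_cat (idem_winv hr) -!catA (catA t) (idem_comm (idem_mulV t) hr).
by rewrite (idem_mulKr _ hr).
Qed.

Lemma absorbs_winv r t : idem r -> absorbs r t -> absorbs r (winv t).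
Proof.
move=> hr ht; rewrite /absorbs; transitivity ((r ++ t) ++ winv t); first by rewrite ht.
by rewrite -catA; apply: absorbs_mulV.
Qed.

Lemma absorbs_mulV_prefix r g u :
  idem r -> absorbs r (g ++ u) -> absorbs r (g ++ winv g).
Proof.
move=> hr hgu; have := absorbs_mulV hr hgu.
rewrite /absorbs winv_cat -!catA => hr'.
transitivity ((r ++ g ++ u ++ winv u ++ winv g) ++ g ++ winv g); first by rewrite hr'.
by rewrite -!catA mulVVK.
Qed.

Lemma absorbs_conj h g u :
  idem u -> absorbs h (g ++ u ++ winv g) -> h ++ g ++ u =M h ++ g.
Proof.
move=> hu; rewrite /absorbs => hg; symmetry.
transitivity ((h ++ g ++ u ++ winv g) ++ g); first by rewrite hg.
by rewrite -!catA (idem_comm hu (idem_Vmul g)) -!catA mulVKr.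
Qed.

Lemma absorbs_mulV_eq r y g : idem r -> absorbs r (y ++ winv g) -> r ++ y =M r ++ g.
Proof.
move=> hr; rewrite /absorbs => hyg.
transitivity ((r ++ y ++ winv g) ++ g); last by rewrite hyg.
have := absorbs_mulV hr hyg; rewrite /absorbs winv_cat winvK -!catA => hr'.
rewrite -{1}hr' -!catA (catA (winv g)) (idem_comm (idem_Vmul g) (idem_Vmul y)).
by rewrite -!catA mulVKr.
Qed.

End Idempotents.

Lemma gtn_trans : transitive gtn.
Proof. by move=> n m p /= mn pn; exact: ltn_trans pn mn. Qed.

Lemma path_gtn_lt d ds : path gtn d ds -> all (fun x => x < d) ds.
Proof. exact: order_path_min gtn_trans. Qed.

Definition codel (k : nat) (S : seq nat) : seq nat :=
  [seq i <- rev (iota 0 k.+1) | i \notin S].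

Lemma codel_sorted k S : sorted gtn (codel k S).
Proof.
by apply: (sorted_filter gtn_trans); rewrite rev_sorted iota_ltn_sorted.
Qed.

Lemma codel_bounded k S : all (fun i => i <= k) (codel k S).
Proof. by apply/allP => i; rewrite mem_filter mem_rev mem_iota => /andP[_ /andP[_]]. Qed.

Lemma count_mem_iota (S : seq nat) n :
  uniq S -> count (mem S) (iota 0 n) = count (fun x => x < n) S.
Proof.
move=> uS; rewrite -!size_filter; apply: perm_size; apply: uniq_perm.
- exact: filter_uniq (iota_uniq 0 n).
- exact: filter_uniq.
- by move=> x; rewrite !mem_filter mem_iota /=; case: (x \in S); case: (x < n).
Qed.

Lemma size_codel k S :
  sorted ltn S -> all (fun i => i <= k) S -> size (codel k S) + size S = k.+1.
Proof.
move=> sS aS; have uS : uniq S by move: sS; rewrite ltn_sorted_uniq_leq => /andP[].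
have cntS : count (mem S) (iota 0 k.+1) = size S.
  rewrite count_mem_iota // -[RHS](count_predT S).
  by apply: eq_in_count => x /(allP aS).
by rewrite size_filter count_rev -cntS addnC count_predC size_iota.
Qed.

Lemma count_lt_nth (S : seq nat) j :
  sorted ltn S -> j < size S -> count (fun x => x < nth 0 S j) S = j.
Proof.
elim: S j => [|a S IH] [|j] //= sS hj; have /allP aS := order_path_min ltn_trans sS.
  rewrite ltnn (eq_in_count (a2 := pred0)) ?count_pred0 //.
  by move=> x /aS /=; lia.
rewrite IH ?(path_sorted sS) //.
by have /aS /= -> := mem_nth 0 hj.
Qed.

Lemma rem_rcons (T : eqType) (s : seq T) x : x \notin s -> rem x (rcons s x) = s.
Proof.
elim: s => [|y s IH] /=; first by rewrite eqxx.
by rewrite inE negb_or eq_sym => /andP [/negbTE -> /IH ->].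
Qed.

Lemma rev_iota2S n : rev (iota 2 n.+1) = n.+2 :: rev (iota 2 n).
Proof. by have := iotaD 2 n 1; rewrite addn1 add2n => ->; rewrite rev_cat. Qed.

Section Faces.
Variable D : dcx.
Hypothesis hD : is_dcomplex D.

Definition dcell := {m : nat & cell D m}.

Definition dface (i : nat) (s : dcell) : dcell :=
  match s with
  | existT 0 c => existT _ 0 c
  | existT m.+1 c => existT _ m (face D i c)
  end.

Definition ddels (ds : seq nat) (s : dcell) : dcell := foldl (fun s i => dface i s) s ds.

Lemma dels_ddels ds k (c : cell D k) : dels ds c = ddels ds (existT _ k c).
Proof. by elim: ds k c => [|i ds IH] [|k] c //=; elim: ds {IH}. Qed.

Lemma ddels_dim ds s : projT1 (ddels ds s) = projT1 s - size ds.
Proof.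
elim: ds s => [|i ds IH] [m c] /=; first by rewrite subn0.
by rewrite IH; case: m c => [|m] c /=; lia.
Qed.

Lemma dface_dface s i j : i < j -> j <= projT1 s -> 2 <= projT1 s ->
  dface i (dface j s) = dface j.-1 (dface i s).
Proof. by case: s => [[|[|m]] c] //= hij hj _; rewrite hD // hij. Qed.

Lemma ddels_dface ds t s : sorted gtn ds -> all (fun x => x < t) ds ->
  t <= projT1 s -> size ds + 2 <= projT1 s ->
  ddels ds (dface t s) = dface (t - size ds) (ddels ds s).
Proof.
elim: ds t s => [|d ds IH] t s /=; first by rewrite subn0.
move=> hs /andP [hdt _] ht hsz.
have ds_lt : all (fun x => x < t.-1) ds.
  by apply/allP => x /(allP (path_gtn_lt hs)) /=; lia.
have dim_face : projT1 (dface d s) = (projT1 s).-1 by case: s {ht hsz} => [[|m] c].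
rewrite dface_dface ?dim_face; try lia.
rewrite IH ?(path_sorted hs) ?dim_face //; first by congr dface; lia.
all: lia.
Qed.

Variables (k : nat) (r : cell D k).

Definition subcell (S : seq nat) : dcell := ddels (codel k S) (existT _ k r).

Lemma subcell_dim S : sorted ltn S -> all (fun i => i <= k) S ->
  projT1 (subcell S) = (size S).-1.
Proof. by move=> sS aS; rewrite ddels_dim /=; have := size_codel sS aS; lia. Qed.

Lemma subcellP S m : sorted ltn S -> all (fun i => i <= k) S -> size S = m.+1 ->
  {x : cell D m | subcell S = existT _ m x}.
Proof.
move=> sS aS hS; case E: (subcell S) => [m' x].
by have := subcell_dim sS aS; rewrite E hS /= => <-; exists x.
Qed.

(* Face operators are indexed by positions: [t] sits at position
   [count (< t) S] of [S]. *)
Lemma subcell_face S (t : nat) : sorted ltn S -> all (fun i => i <= k) S -> t \in S ->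
  3 <= size S -> dface (count (fun x => x < t) S) (subcell S) = subcell (rem t S).
Proof.
move=> sS aS tS S3.
have uS : uniq S by move: sS; rewrite ltn_sorted_uniq_leq => /andP[].
have tk : t <= k by exact: (allP aS).
have split_k : rev (iota 0 k.+1) = rev (iota t.+1 (k - t)) ++ t :: rev (iota 0 t).
  have -> : k.+1 = t + (k - t).+1 by lia.
  by rewrite iotaD add0n /= rev_cat rev_cons cat_rcons.
set hi : seq nat := [seq i <- rev (iota t.+1 (k - t)) | i \notin S].
set lo : seq nat := [seq i <- rev (iota 0 t) | i \notin S].
have codelS : codel k S = hi ++ lo by rewrite /codel split_k filter_cat /= tS.
have codelSt : codel k (rem t S) = hi ++ t :: lo.
  rewrite /codel split_k filter_cat /= (rem_filter _ uS) mem_filter /= eqxx /=.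
  by congr (_ ++ _ :: _); apply: eq_in_filter => x;
    rewrite mem_rev mem_iota mem_filter /= => hx; have -> : x != t by apply/eqP; lia.
have size_hi : size hi <= k - t.
  by rewrite size_filter (leq_trans (count_size _ _)) // size_rev size_iota.
have size_lo : size lo = t - count (fun x => x < t) S.
  rewrite size_filter count_rev -(count_mem_iota _ uS).
  by rewrite -[X in X - _](size_iota 0 t) -(count_predC (mem S)) addKn.
have count_le : count (fun x => x < t) S <= t.
  by rewrite -(count_mem_iota _ uS) (leq_trans (count_size _ _)) // size_iota.
have lo_sorted : sorted gtn lo.
  by apply: (sorted_filter gtn_trans); rewrite rev_sorted iota_ltn_sorted.
have lo_lt : all (fun x => x < t) lo.
  by apply/allP => x; rewrite mem_filter mem_rev mem_iota => /andP[_] /=; lia.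
have := size_codel sS aS; rewrite codelS size_cat => size_hilo.
clearbody hi lo.
rewrite /subcell codelS codelSt /ddels !foldl_cat /= -!/(ddels lo _) -/(ddels hi _).
rewrite ddels_dface.
- by rewrite size_lo subKn.
- exact: lo_sorted.
- exact: lo_lt.
- by rewrite ddels_dim /=; lia.
- by rewrite ddels_dim /=; lia.
Qed.

Lemma edge01_ddels n (x : cell D n.+1) :
  existT _ 1 (edge01 x) = ddels (rev (iota 2 n)) (existT _ n.+1 x).
Proof. by elim: n x => [|n IH] x //; rewrite rev_iota2S; exact: IH. Qed.

Lemma subcell_dface S j : sorted ltn S -> all (fun i => i <= k) S ->
  j < size S -> 3 <= size S -> dface j (subcell S) = subcell (rem (nth 0 S j) S).
Proof.
by move=> sS aS jS S3; rewrite -subcell_face ?mem_nth ?count_lt_nth.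
Qed.

Lemma subcell_take2 S n : sorted ltn S -> all (fun i => i <= k) S -> size S = n.+2 ->
  ddels (rev (iota 2 n)) (subcell S) = subcell (take 2 S).
Proof.
elim: n S => [|n IH] S sS aS hS; first by rewrite take_oversize ?hS.
case/lastP: S sS aS hS => [|S t] // sS aS; rewrite size_rcons => -[hS].
have sS' : sorted ltn S by move: sS; rewrite -cats1 => /cat_sorted2 [].
have aS' : all (fun i => i <= k) S by move: aS; rewrite all_rcons => /andP [].
have tS : t \notin S.
  move: sS; rewrite -rev_sorted rev_rcons => /path_gtn_lt.
  by rewrite all_rev => /allP lt_t; apply/negP => /lt_t; rewrite ltnn.
rewrite rev_iota2S /= (subcell_dface (j := n.+2)) ?size_rcons ?hS //.
rewrite nth_rcons hS ltnn eqxx rem_rcons // IH //.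
by rewrite -cats1 takel_cat // hS.
Qed.
End Faces.

Definition dword (B : dcx) (s : dcell B) (inv : bool) : word B :=
  match s with
  | existT 0 _ => [::]
  | existT m.+1 x => [:: (existT (fun j => cell B j.+1) m x, inv)]
  end.

Lemma dword_inv (B : dcx) (s : dcell B) : dword s true = winv (dword s false).
Proof. by case: s => [[|m] x]. Qed.

Section Labeling.
Variables (C B : dcx) (f : forall m, cell C m -> cell B m).
Hypothesis hf : is_labeling f.

Definition map_dcell (d : dcell C) : dcell B := existT _ (projT1 d) (f (projT2 d)).

Lemma map_dcell_dels ds k (c : cell C k) :
  sorted gtn ds -> all (fun d => d <= k) ds ->
  map_dcell (dels ds c) = dels ds (f c).
Proof.
case: hf => hface _; elim: ds k c => [|d ds IH] [|k] c //= hs /andP [hd hds].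
rewrite -hface // IH //; first exact: path_sorted hs.
by apply/allP => x /(allP (path_gtn_lt hs)) /=; lia.
Qed.

Lemma image_word_subcell k (c : cell C k) q :
  image_word f c q = flatten [seq dword (subcell (f c) x.1) x.2 | x <- q].
Proof.
congr flatten; apply: eq_map => x.
have -> : cellword f (subface c x.1) x.2 = dword (map_dcell (subface c x.1)) x.2.
  by case: (subface c x.1) => [[|m] y].
by rewrite /subface map_dcell_dels ?codel_sorted ?codel_bounded // dels_ddels.
Qed.
End Labeling.

Section BoundaryPaths.
Variable B : dcx.
Hypothesis hB : is_dcomplex B.
Implicit Type h : word B.
Local Notation "u =M v" := (@eqM B u v) (at level 70).

Lemma idem_ltP m (x : cell B m.+2) : idem [:: Defs.ltP x].
Proof. by apply: idemP; apply: rstep_eqM; apply: RPidem. Qed.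

(* For a cell [x] of dimension at least 3, [bl x] is the product of the
   idempotents [x_i] (i >= 1) and the conjugate [e(x) x_0 e(x)^-1]. *)
Lemma absorbs_bl h m (x : cell B m.+3) : absorbs h [:: Defs.ltP x] ->
  (forall i, 0 < i <= m.+3 -> absorbs h [:: Defs.ltP (face B i x)]) /\
  absorbs h ([:: lt1 (edge01 x) false] ++ [:: Defs.ltP (face B 0 x)] ++
             [:: lt1 (edge01 x) true]).
Proof.
move=> hx; set e := [:: lt1 (edge01 x) false].
have hbl : absorbs h (flatten [seq [:: Defs.ltP (face B i x)] | i <- rev (iota 1 m.+3)] ++
                      e ++ [:: Defs.ltP (face B 0 x)] ++ winv e).
  by rewrite flatten_map1; apply: absorbs_eqM hx _; exact: rstep_eqM (RPbl x).
have idem_faces i : idem [:: Defs.ltP (face B i x)] by exact: idem_ltP.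
have idem_tail := idem_conj e (idem_ltP (face B 0 x)).
have [hfaces htail] := absorbs_split (idem_flatten _ idem_faces) idem_tail hbl.
split=> // i hi; apply: (absorbs_flatten idem_faces hfaces).
by rewrite mem_rev mem_iota; lia.
Qed.

Lemma absorbs_ddels h ds (y : dcell B) : sorted gtn ds ->
  all (fun d => 0 < d <= projT1 y) ds -> size ds + 2 <= projT1 y ->
  absorbs h (dword y false) -> absorbs h (dword (ddels ds y) false).
Proof.
elim: ds y => [|d ds IH] [[|[|[|m]]] x] //= hs /andP [hd hds] hsz hx; try lia.
apply: IH; first exact: path_sorted hs.
- apply/allP => z zds; have := allP hds z zds; have := allP (path_gtn_lt hs) z zds.
  by rewrite /=; lia.
- by rewrite /=; lia.
- by have [] := absorbs_bl hx; move/(_ d hd).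
Qed.

Variables (k : nat) (r : cell B k.+2).

Definition rho : word B := [:: Defs.ltP r].

Definition face_word (S : seq nat) : word B := dword (subcell r S) false.

Definition spoke (a : nat) : word B := if a == 0 then [::] else face_word [:: 0; a].

Lemma idem_rho : idem rho.
Proof. exact: idem_ltP. Qed.

Lemma absorbs_face0 S : sorted ltn S -> all (fun i => i <= k.+2) S ->
  0 \in S -> 3 <= size S -> absorbs rho (face_word S).
Proof.
move=> sS aS S0 S3; apply: absorbs_ddels => /=.
- exact: codel_sorted.
- apply/allP => d; rewrite mem_filter mem_rev mem_iota => /andP [dS dk].
  have : d != 0 by apply: contraNneq dS => ->.
  lia.
- by have := size_codel sS aS; lia.
- exact: rstep_eqM (RPidem r).
Qed.

Lemma spoke0 : spoke 0 = [::].
Proof. by []. Qed.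

Lemma spoke_pos a : 0 < a -> spoke a = face_word [:: 0; a].
Proof. by rewrite /spoke; case: eqP => //; lia. Qed.

Lemma absorbs_triangle i j : 0 < i < j -> j <= k.+2 ->
  absorbs rho (spoke i ++ face_word [:: i; j] ++ winv (spoke j)).
Proof.
move=> /andP [i0 ij] jk; set S := [:: 0; i; j].
have sS : sorted ltn S by rewrite /= i0 ij.
have aS : all (fun x => x <= k.+2) S by rewrite /= jk; apply/andP; split; lia.
have [x Sx] := subcellP r (m := 2) sS aS erefl.
have hx : absorbs rho [:: Defs.ltP x].
  by have := absorbs_face0 sS aS (mem_head _ _) (leqnn 3); rewrite /face_word Sx.
have faceS t : t < 3 -> face_word (rem (nth 0 S t) S) = dword (dface t (existT _ 2 x)) false.
  by move=> t3; rewrite /face_word -(subcell_dface hB) // Sx.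
have [n0i n0j nij] : [/\ 0 != i, 0 != j & i != j] by split; apply/eqP; lia.
have := faceS 2 isT; have := faceS 1 isT; have := faceS 0 isT.
rewrite /= !eqxx (negbTE n0i) (negbTE n0j) (negbTE nij) /= => f0 f1 f2.
rewrite !spoke_pos; try lia.
rewrite f0 f1 f2 /=.
exact: absorbs_eqM hx (rstep_eqM (RPbl x)).
Qed.

Lemma absorbs_spokeV j : 0 < j <= k.+2 -> absorbs rho (spoke j ++ winv (spoke j)).
Proof.
move=> /andP [j0 jk]; case: (ltnP 1 j) => j1.
  have := absorbs_winv idem_rho (@absorbs_triangle 1 j j1 jk).
  by rewrite !winv_cat winvK -!catA; apply: absorbs_mulV_prefix idem_rho.
have -> : j = 1 by lia.
exact: absorbs_mulV_prefix idem_rho (@absorbs_triangle 1 2 isT isT).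
Qed.

Lemma spoke_edge i j : i < j <= k.+2 ->
  rho ++ spoke i ++ face_word [:: i; j] =M rho ++ spoke j.
Proof.
move=> /andP [ij jk]; case: (posnP i) => [i0 | i0].
  by rewrite i0 spoke0 (spoke_pos (a := j)) //; lia.
rewrite catA; apply: absorbs_mulV_eq idem_rho _.
by rewrite -catA; apply: absorbs_triangle => //; rewrite i0.
Qed.

Lemma spoke_edgeV i j : i < j <= k.+2 ->
  rho ++ spoke j ++ winv (face_word [:: i; j]) =M rho ++ spoke i.
Proof.
move=> /andP [ij jk]; case: (posnP i) => [i0 | i0].
  rewrite i0 -(spoke_pos (a := j)); last lia.
  by rewrite spoke0 cats0; apply: absorbs_spokeV; lia.
rewrite catA; apply: absorbs_mulV_eq idem_rho _.
have := absorbs_winv idem_rho (@absorbs_triangle i j (introT andP (conj i0 ij)) jk).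
by rewrite !winv_cat winvK -!catA.
Qed.

(* For a face [S] missing the root, the face [0 :: S] has [bl] containing
   [e S e^-1] with [e] the spoke to the first vertex of [S]. *)
Lemma spoke_face S : sorted ltn S -> all (fun i => i <= k.+2) S -> 3 <= size S ->
  rho ++ spoke (head 0 S) ++ face_word S =M rho ++ spoke (head 0 S).
Proof.
case: S => [|a S] // sS aS S3; rewrite [head _ _]/=; case: (posnP a) => [a0 | a0].
  by subst a; rewrite spoke0; apply: absorbs_face0 => //; rewrite mem_head.
set S0 := [:: 0, a & S].
have sS0 : sorted ltn S0 by rewrite /S0 /= a0.
have aS0 : all (fun i => i <= k.+2) S0 by [].
have [m S0m] : exists m, size S0 = m.+4 by exists (size S).-2; rewrite /= in S3 *; lia.
have [x S0x] := subcellP r sS0 aS0 S0m.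
have hx : absorbs rho [:: Defs.ltP x].
  have S03 : 3 <= size S0 by rewrite S0m.
  by have := absorbs_face0 sS0 aS0 (mem_head _ _) S03; rewrite /face_word S0x.
have spoke_a : spoke a = [:: lt1 (edge01 x) false].
  have S0_take : take 2 S0 = [:: 0; a] by rewrite /S0 /= take0.
  rewrite spoke_pos // /face_word -S0_take -(subcell_take2 hB r sS0 aS0 S0m).
  by rewrite S0x -edge01_ddels.
have face_S : face_word (a :: S) = [:: Defs.ltP (face B 0 x)].
  have -> : a :: S = rem (nth 0 S0 0) S0 by [].
  by rewrite /face_word -(subcell_dface hB) ?S0m // S0x.
rewrite spoke_a face_S; apply: (absorbs_conj (idem_ltP (face B 0 x))).
by have [] := absorbs_bl hx.
Qed.

Lemma spoke_item x : valid_bitem k.+2 x ->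
  rho ++ spoke (balpha x) ++ dword (subcell r x.1) x.2 =M rho ++ spoke (bomega x).
Proof.
case: x => S b; rewrite /valid_bitem /balpha /bomega /= => /and5P [sS aS S2 Sk hb].
case: S sS aS S2 Sk hb => [|i [|j [|l S]]] // sS aS _ Sk hb.
  have ijk : i < j <= k.+2 by move: sS aS => /= /andP [-> _] /and3P [].
  by case: b {hb} => /=; [rewrite dword_inv; apply: spoke_edgeV | apply: spoke_edge].
case: b hb => // _.
exact: (@spoke_face [:: i, j, l & S]).
Qed.

Lemma spoke_path q a : all (valid_bitem k.+2) q ->
  (forall i, i.+1 < size q ->
     bomega (nth ([::], false) q i) = balpha (nth ([::], false) q i.+1)) ->
  (q != [::] -> balpha (head ([::], false) q) = a) ->
  rho ++ spoke a ++ flatten [seq dword (subcell r x.1) x.2 | x <- q] =M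
  rho ++ spoke (last a [seq bomega x | x <- q]).
Proof.
elim: q a => [|x q IH] a; first by rewrite /= cats0.
move=> /andP [hx hq] hpath /(_ isT) <-; rewrite [flatten _]/= [last _ _]/=.
rewrite [spoke _ ++ _]catA catA spoke_item // -catA; apply: IH => //.
- by move=> i hi; exact: (hpath i.+1).
- by case: q {hq} hpath => [|y q] // hpath _; rewrite (hpath 0).
Qed.
End BoundaryPaths.

Theorem mainTheorem7 (B : dcx) (n : nat) (hB : is_BXP B n)
  (C : dcx) (hC : is_dcomplex C)
  (f : forall m, cell C m -> cell B m) (hf : is_labeling f)
  (k : nat) (c : cell C k.+2)
  (q : seq bitem) (hq : closed_bpath k.+2 q) :
  leM [:: (existT (fun j => cell B j.+1) k.+1 (f k.+2 c), false)]
      (image_word f c q).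
Proof.
have [hBc _ _] := hB; have [valid_q [path_q closed_q]] := hq.
exists (rho (f k.+2 c)); split; first exact: rstep_eqM (RPidem _).
rewrite (image_word_subcell hf); symmetry.
have := spoke_path hBc (f k.+2 c) (a := 0) valid_q path_q (fun q0 => (closed_q q0).1).
rewrite spoke0 /= => ->.
case: q {hq valid_q path_q} closed_q => [|x q] closed_q; first by rewrite spoke0.
by rewrite /= last_map (closed_q isT).2 spoke0.
Qed.
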